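(* Let $\Omega$ be a compact metric space, $T:\Omega\to\Omega$ continuous with a dense orbit, $\mathcal{H}$ a complete metric space and $A:\Omega\to\mathrm{Isom}(\mathcal{H})$ continuous for the topology of uniform convergence on bounded sets. Let $F:\Omega\times\mathcal{H}\to\Omega\times\mathcal{H}$, $F(\omega,h)=(T\omega,A(\omega)\cdot h)$, and $I_T(\omega,h)=(T\omega,h)$. The following are equivalent: (P2) there exists $G:\Omega\to\mathrm{Homeo}(\mathcal{H})$, continuous for the pointwise topology, such that the map $\mathcal{G}(\omega,h)=(\omega,G(\omega)\cdot h)$ satisfies $\mathcal{G}^{-1}\circ F\circ\mathcal{G}=I_T$; (P3) for every $(\omega_0,h_0)\in\Omega\times\mathcal{H}$ there exists a continuous map $s_{\omega_0,h_0}:\Omega\to\mathcal{H}$ with $s_{\omega_0,h_0}(\omega_0)=h_0$ and $A(\omega)\cdot s_{\omega_0,h_0}(\omega)=s_{\omega_0,h_0}(T\omega)$ for all $\omega\in\Omega$, and for every $\omega_0,\omega\in\Omega$ the map $h_0\mapsto s_{\omega_0,h_0}(\omega)$ is continuous.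
   Context: Continuity of $A$ for uniform convergence on bounded sets: for every bounded $K\subset\mathcal{H}$, $\omega_0\in\Omega$, $\varepsilon>0$ there is $\delta>0$ with $d_{\mathcal{H}}(A(\omega)h,A(\omega_0)h)<\varepsilon$ for all $h\in K$ when $d_\Omega(\omega,\omega_0)<\delta$. $\mathrm{Homeo}(\mathcal{H})$ is the group of homeomorphisms of $\mathcal{H}$; $G:\Omega\to\mathrm{Homeo}(\mathcal{H})$ is continuous for the pointwise topology if $\omega\mapsto G(\omega)\cdot h$ is continuous for each $h\in\mathcal{H}$. *)

From HB Require Import structures.
From mathcomp Require Import all_boot all_order all_algebra.
From mathcomp Require Import all_classical all_reals all_analysis.
Set Implicit Arguments. Unset Strict Implicit. Unset Printing Implicit Defensive.
Import Order.TTheory GRing.Theory Num.Theory.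
Local Open Scope classical_set_scope.
Local Open Scope ring_scope.

Section defs.
Context {R : realType}.

Definition complete_metric (X : metricType R) : Prop :=
  forall u : nat -> X,
    (forall e : R, 0 < e -> exists N : nat, forall m n : nat,
        (N <= m)%N -> (N <= n)%N -> mdist (u m) (u n) < e) ->
    exists l : X, u @ \oo --> l.

Definition bounded_set (X : metricType R) (K : set X) : Prop :=
  exists (c : X) (r : R), forall h, K h -> mdist c h <= r.

Definition is_isometry (X : metricType R) (f : X -> X) : Prop :=
  (forall x y, mdist (f x) (f y) = mdist x y) /\ (forall y, exists x, f x = y).

Definition ucb_continuous (Om H : metricType R) (A : Om -> H -> H) : Prop :=
  forall (K : set H) (w0 : Om) (e : R), bounded_set K -> 0 < e ->
    exists2 d : R, 0 < d & forall w : Om, mdist w w0 < d ->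
      forall h, K h -> mdist (A w h) (A w0 h) < e.

Definition is_homeo_pair (X : metricType R) (f g : X -> X) : Prop :=
  continuous f /\ continuous g /\ cancel f g /\ cancel g f.

Definition has_dense_orbit (Om : metricType R) (T : Om -> Om) : Prop :=
  exists w0 : Om, dense (range (fun n : nat => iter n T w0)).

Definition skewF (Om H : Type) (T : Om -> Om) (A : Om -> H -> H)
  (p : Om * H) : Om * H := (T p.1, A p.1 p.2).

Definition I_T (Om H : Type) (T : Om -> Om) (p : Om * H) : Om * H :=
  (T p.1, p.2).

Definition fiberwise (Om H : Type) (G : Om -> H -> H) (p : Om * H) : Om * H :=
  (p.1, G p.1 p.2).

End defs.

(* If G conjugates F to I_T, then w |-> G(w) (G(w0)^-1 h0) is an invariant
   section through (w0, h0).  Conversely, as every A(w) is an isometry, the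
   distance between two continuous invariant sections is T-invariant, hence
   constant by the dense orbit; so an invariant section is determined by its
   value at a single point, and G(w) h := s_{ws,h}(w), with inverse
   h |-> s_{w,h}(ws), is the required conjugacy. *)

From HB Require Import structures.
From mathcomp Require Import all_boot all_order all_algebra.
From mathcomp Require Import all_classical all_reals all_analysis.
From mathcomp Require Import lra.
Import Order.TTheory GRing.Theory Num.Theory numFieldNormedType.Exports.
Local Open Scope classical_set_scope.
Local Open Scope ring_scope.
Set Implicit Arguments. Unset Strict Implicit. Unset Printing Implicit Defensive.

Lemma dense_closed_setT (X : topologicalType) (S E : set X) :
  dense S -> closed E -> S `<=` E -> E = setT.
Proof.
move=> dS cE SE; apply/seteqP; split=> // x _; apply: contrapT => Ex.
have [y [Ey Sy]] := dS (~` E) (ex_intro _ x Ex) (closed_openC cE).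
exact/Ey/SE.
Qed.

Lemma dense_orbit_invariant_cst (X Y : topologicalType) (T : X -> X) (x0 : X)
  (phi : X -> Y) : hausdorff_space Y ->
  dense (range (fun n => iter n T x0)) -> continuous phi ->
  (forall x, phi (T x) = phi x) -> forall x, phi x = phi x0.
Proof.
move=> hY D cphi phiT x.
have orbit n : phi (iter n T x0) = phi x0.
  by elim: n => // n IHn; rewrite iterS phiT.
have cst : phi @^-1` [set phi x0] = setT.
  apply: dense_closed_setT D _ _; last by move=> _ [n _ <-]; exact: orbit.
  apply: preimage_closed; first by move=> ? _; exact: cphi.
  exact/accessible_closed_set1/hausdorff_accessible.
by have : (phi @^-1` [set phi x0]) x by rewrite cst.
Qed.

Lemma ler_dist_mdist (R : realType) (M : metricType R) (x y x' y' : M) :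
  `|mdist x y - mdist x' y'| <= mdist x x' + mdist y y'.
Proof.
have := metric_triangle x x' y; have := metric_triangle x' y' y.
have := metric_triangle x' x y'; have := metric_triangle x y y'.
rewrite (metric_sym x' x) (metric_sym y' y) ler_norml; lra.
Qed.

Lemma continuous_mdist (R : realType) (X : topologicalType) (M : metricType R)
  (f g : X -> M) : continuous f -> continuous g ->
  continuous (fun x => mdist (f x) (g x)).
Proof.
move=> cf cg x; apply/cvgrPdist_lt => e e0.
have e20 : 0 < e / 2 by rewrite divr_gt0.
near=> t.
have fxt : ball (f x) (e / 2) (f t) by near: t; apply: (cvg_ball (cf x) e20).
have gxt : ball (g x) (e / 2) (g t) by near: t; apply: (cvg_ball (cg x) e20).
move: fxt gxt; rewrite !ballEmdist /= => fxt gxt.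
have := ler_dist_mdist (f x) (g x) (f t) (g t); lra.
Unshelve. all: by end_near.
Qed.

Section invariant_sections.
Variables (R : realType) (Om H : metricType R) (T : Om -> Om) (A : Om -> H -> H).

Definition invariant_section (s : Om -> H) := forall w, A w (s w) = s (T w).

Definition invariant_section_family (s : Om -> H -> Om -> H) :=
  (forall w0 h0, continuous (s w0 h0) /\ s w0 h0 w0 = h0 /\
    invariant_section (s w0 h0)) /\
  (forall w0 w, continuous (fun h0 => s w0 h0 w)).

Definition fiberwise_conjugacy (G Ginv : Om -> H -> H) :=
  (forall w, is_homeo_pair (G w) (Ginv w)) /\
  (forall h, continuous (fun w => G w h)) /\
  (forall p, fiberwise Ginv (skewF T A (fiberwise G p)) = I_T T p).

Hypothesis isoA : forall w x y, mdist (A w x) (A w y) = mdist x y.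

(* The distance between two invariant sections is T-invariant, hence constant
   along the dense orbit, hence constant. *)
Lemma invariant_sections_eq (s s' : Om -> H) (w0 : Om) :
  has_dense_orbit T -> continuous s -> continuous s' ->
  invariant_section s -> invariant_section s' -> s w0 = s' w0 -> s =1 s'.
Proof.
move=> [ws D] cs cs' inv_s inv_s' ss'w0 w.
have dT w1 : mdist (s (T w1)) (s' (T w1)) = mdist (s w1) (s' w1).
  by rewrite -inv_s -inv_s' isoA.
have cst := dense_orbit_invariant_cst (@norm_hausdorff _ R^o) D
  (continuous_mdist cs cs') dT.
by apply: mdist_positivity; rewrite cst -(cst w0) ss'w0 mdistxx.
Qed.

Lemma invariant_section_family_rebase (s : Om -> H -> Om -> H) :
  has_dense_orbit T -> invariant_section_family s ->
  forall w0 w1 h0, s w1 (s w0 h0 w1) =1 s w0 h0.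
Proof.
move=> D [hs _] w0 w1 h0; have [c0 [_ inv0]] := hs w0 h0.
have [c1 [s1w1 inv1]] := hs w1 (s w0 h0 w1).
exact: invariant_sections_eq D c1 c0 inv1 inv0 s1w1.
Qed.

Lemma fiberwise_conjugacy_invariant_sections (G Ginv : Om -> H -> H) :
  fiberwise_conjugacy G Ginv ->
  invariant_section_family (fun w0 h0 w => G w (Ginv w0 h0)).
Proof.
move=> [hom [cG conj]].
have inv h w : A w (G w h) = G (T w) h.
  have [_ [_ [_ GK]]] := hom (T w).
  have := conj (w, h); rewrite /fiberwise /skewF /I_T /= => -[Ginv_inv].
  by rewrite -[LHS]GK Ginv_inv.
split=> [w0 h0 | w0 w].
  have [_ [_ [_ GK]]] := hom w0.
  by split; [exact: cG | split; [exact: GK | move=> w; exact: inv]].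
have [cGw _] := hom w; have [_ [cGinv _]] := hom w0.
by move=> h; apply: continuous_comp (cGinv h) (cGw _).
Qed.

Lemma invariant_sections_fiberwise_conjugacy
  (s : Om -> H -> Om -> H) (ws : Om) :
  has_dense_orbit T -> invariant_section_family s ->
  fiberwise_conjugacy (fun w h => s ws h w) (fun w h => s w h ws).
Proof.
move=> D hs; have rebase := invariant_section_family_rebase D hs.
have [hs0 cs] := hs.
have base w0 h0 : s w0 h0 w0 = h0 by have [_ []] := hs0 w0 h0.
split; [move=> w | split; [move=> h; exact: (hs0 ws h).1 | case=> w h]].
  split; first exact: cs.
  split; first exact: cs.
  by split=> h /=; rewrite rebase base.
have [_ [_ inv]] := hs0 ws h.
by rewrite /fiberwise /skewF /I_T /= inv rebase base.
Qed.

End invariant_sections.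

Theorem proposition2p8 (R : realType) (Om H : metricType R)
  (T : Om -> Om) (A : Om -> H -> H) :
  compact [set: Om] ->
  continuous T ->
  has_dense_orbit T ->
  complete_metric H ->
  (forall w, is_isometry (A w)) ->
  ucb_continuous A ->
  ( (* (P2) *)
    (exists G Ginv : Om -> H -> H,
       (forall w, is_homeo_pair (G w) (Ginv w)) /\
       (forall h, continuous (fun w => G w h)) /\
       (forall p : Om * H,
          fiberwise Ginv (skewF T A (fiberwise G p)) = I_T T p))
  <->
    (* (P3) *)
    (exists s : Om -> H -> Om -> H,
       (forall (w0 : Om) (h0 : H),
          continuous (s w0 h0) /\ s w0 h0 w0 = h0 /\
          (forall w, A w (s w0 h0 w) = s w0 h0 (T w))) /\
       (forall w0 w : Om, continuous (fun h0 => s w0 h0 w)))).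
Proof.
move=> _ _ D _ isoA _; have dist_isoA w := (isoA w).1.
have [ws _] := D.
split=> [[G [Ginv conj]] | [s family]].
  exists (fun w0 h0 w => G w (Ginv w0 h0)).
  exact (fiberwise_conjugacy_invariant_sections conj).
exists (fun w h => s ws h w), (fun w h => s w h ws).
exact (invariant_sections_fiberwise_conjugacy dist_isoA ws D family).
Qed.
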